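(* Let $\beta_0,n,\delta,r,k>0$. Let $\mathcal{B}_+$ be the set of continuous functions $\phi:[-r,0]\to[0,\infty)$. Define $G(u)=\int_0^u\frac{2s}{1+s^n}\,ds$ for $u\ge0$, and $$V(\phi)=G(\phi(0))+k\beta_0\int_{-r}^{0}\frac{\phi(s)^2}{(1+\phi(s)^n)^2}\,ds,\qquad \phi\in\mathcal{B}_+.$$ For $\phi\in\mathcal{B}_+$ let $x(\cdot,\phi)$ denote the solution of $$\dot{x}(t)=-\Big[\frac{\beta_0}{1+x(t)^n}+\delta\Big]x(t)+k\,\frac{\beta_0\,x(t-r)}{1+x(t-r)^n}$$ with $x(s,\phi)=\phi(s)$ on $[-r,0]$, let $x_h(\phi)\in\mathcal{B}_+$ be $x_h(\phi)(s)=x(h+s,\phi)$, and set $\dot V(\phi)=\limsup_{h\to0^+}\frac1h[V(x_h(\phi))-V(\phi)]$. Then for every $\phi\in\mathcal{B}_+$, $$\dot V(\phi)\le 2(k\beta_0-\beta_0-\delta)\,\frac{\phi(0)^2}{(1+\phi(0)^n)^2}.$$ In particular, if $k\beta_0=\beta_0+\delta$, then $\dot V(\phi)\le 0$ for all $\phi\in\mathcal{B}_+$.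
   Context: The solution $x(\cdot,\phi)$ exists on $[-r,\infty)$, is unique and nonnegative for nonnegative continuous initial data. *)

From Stdlib Require Import Reals Lra ClassicalEpsilon.
Open Scope R_scope.

(* Real power with positive exponent, extended by 0 at 0 (and, irrelevantly, on negatives). *)
Definition rpow (x a : R) : R :=
  if Rle_dec x 0 then 0 else Rpower x a.

(* Total Riemann integral: the Riemann integral if f is Riemann integrable on [a,b], 0 otherwise.
   (RiemannInt is independent of the integrability proof, RiemannInt_P5.) *)
Definition Rint (f : R -> R) (a b : R) : R :=
  match excluded_middle_informative
          (exists _ : Riemann_integrable f a b, True) with
  | left H => RiemannInt (proj1_sig (constructive_indefinite_description _ H))
  | right _ => 0
  end.

Definition continuous_on (f : R -> R) (a b : R) : Prop :=
  forall s, a <= s <= b -> forall eps, 0 < eps -> exists d, 0 < d /\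
    forall t, a <= t <= b -> Rabs (t - s) < d -> Rabs (f t - f s) < eps.

Definition Gfun (n u : R) : R := Rint (fun s => 2 * s / (1 + rpow s n)) 0 u.

Definition gsq (n y : R) : R := y ^ 2 / (1 + rpow y n) ^ 2.

Definition Vfun (beta0 n k r : R) (phi : R -> R) : R :=
  Gfun n (phi 0) + k * beta0 * Rint (fun s => gsq n (phi s)) (- r) 0.

Definition shift (x : R -> R) (h : R) : R -> R := fun s => x (h + s).

Definition rhs (beta0 n delta k r : R) (x : R -> R) (t : R) : R :=
  - (beta0 / (1 + rpow (x t) n) + delta) * x t
  + k * (beta0 * x (t - r) / (1 + rpow (x (t - r)) n)).

Definition is_solution (beta0 n delta k r : R) (phi x : R -> R) : Prop :=
  (forall s, - r <= s <= 0 -> x s = phi s) /\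
  (forall t, - r <= t -> 0 <= x t) /\
  (forall t, 0 < t -> derivable_pt_lim x t (rhs beta0 n delta k r x t)) /\
  (forall eps, 0 < eps -> exists d, 0 < d /\ forall h, 0 < h < d ->
      Rabs ((x h - x 0) / h - rhs beta0 n delta k r x 0) < eps).

(* Along the solution, V(x_h) = G(x(h)) + k beta0 int_{h-r}^h g(x(s)) ds with g(y) = y^2/(1+y^n)^2.
   By the chain rule and the fundamental theorem of calculus its right derivative at h = 0 is
   G'(x(0)) x'(0+) + k beta0 (g(x(0)) - g(x(-r))).  With a = x(0)/(1+x(0)^n) and
   b = x(-r)/(1+x(-r)^n) this equals -2 beta0 a^2 - 2 delta a x(0) + 2 k beta0 a b + k beta0 (a^2 - b^2),
   which is at most 2 (k beta0 - beta0 - delta) a^2 because 2ab - b^2 <= a^2 and a <= x(0). *)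
From Stdlib Require Import Reals Lra ClassicalEpsilon.
Open Scope R_scope.

Definition right_derivative (f : R -> R) (t l : R) : Prop :=
  forall eps, 0 < eps -> exists d, 0 < d /\ forall h, 0 < h < d ->
    Rabs ((f (t + h) - f t) / h - l) < eps.

Lemma derivable_pt_lim_right_derivative f t l :
  derivable_pt_lim f t l -> right_derivative f t l.
Proof.
  intros Hf eps He. destruct (Hf eps He) as [d Hd].
  exists d; split; [apply cond_pos|]. intros h Hh.
  apply Hd; [lra| rewrite Rabs_right; lra].
Qed.

Lemma right_derivative_plus f g t lf lg :
  right_derivative f t lf -> right_derivative g t lg ->
  right_derivative (fun s => f s + g s) t (lf + lg).
Proof.
  intros Hf Hg eps He.
  destruct (Hf (eps / 2) ltac:(lra)) as [d1 [Hd1 H1]].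
  destruct (Hg (eps / 2) ltac:(lra)) as [d2 [Hd2 H2]].
  exists (Rmin d1 d2); split; [now apply Rmin_pos|]. intros h Hh.
  pose proof (Rmin_l d1 d2); pose proof (Rmin_r d1 d2).
  replace ((f (t + h) + g (t + h) - (f t + g t)) / h - (lf + lg))
    with (((f (t + h) - f t) / h - lf) + ((g (t + h) - g t) / h - lg)) by (field; lra).
  eapply Rle_lt_trans; [apply Rabs_triang|].
  specialize (H1 h ltac:(lra)); specialize (H2 h ltac:(lra)). lra.
Qed.

Lemma right_derivative_scal c f t l :
  right_derivative f t l -> right_derivative (fun s => c * f s) t (c * l).
Proof.
  intros Hf eps He. pose proof (Rabs_pos c) as Hc.
  destruct (Hf (eps / (Rabs c + 1))) as [d [Hd Hq]]; [apply Rdiv_lt_0_compat; lra|].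
  exists d; split; [exact Hd|]. intros h Hh.
  replace ((c * f (t + h) - c * f t) / h - c * l)
    with (c * ((f (t + h) - f t) / h - l)) by (field; lra).
  rewrite Rabs_mult. specialize (Hq h Hh).
  apply Rle_lt_trans with ((Rabs c + 1) * Rabs ((f (t + h) - f t) / h - l)).
  - apply Rmult_le_compat_r; [apply Rabs_pos| lra].
  - apply Rlt_le_trans with ((Rabs c + 1) * (eps / (Rabs c + 1)));
      [apply Rmult_lt_compat_l; lra| right; field; lra].
Qed.

Lemma right_derivative_right_continuous f t l : right_derivative f t l ->
  forall eps, 0 < eps -> exists d, 0 < d /\ forall h, 0 < h < d -> Rabs (f (t + h) - f t) < eps.
Proof.
  intros Hf eps He. destruct (Hf 1 Rlt_0_1) as [d [Hd H]].
  set (M := Rabs l + 1). assert (HM : 0 < M) by (pose proof (Rabs_pos l); unfold M; lra).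
  exists (Rmin d (eps / M)); split; [apply Rmin_pos; [lra| now apply Rdiv_lt_0_compat]|].
  intros h Hh. pose proof (Rmin_l d (eps / M)); pose proof (Rmin_r d (eps / M)).
  assert (Hq : Rabs ((f (t + h) - f t) / h) < M).
  { replace ((f (t + h) - f t) / h) with (((f (t + h) - f t) / h - l) + l) by ring.
    pose proof (Rabs_triang ((f (t + h) - f t) / h - l) l).
    specialize (H h ltac:(lra)). unfold M; lra. }
  replace (f (t + h) - f t) with ((f (t + h) - f t) / h * h) by (field; lra).
  rewrite Rabs_mult, (Rabs_right h) by lra.
  apply Rlt_le_trans with (M * h); [apply Rmult_lt_compat_r; lra|].
  apply Rle_trans with (M * (eps / M)); [apply Rmult_le_compat_l; lra| right; field; lra].
Qed.

Lemma derivable_pt_lim_first_order g y l : derivable_pt_lim g y l ->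
  forall eps, 0 < eps -> exists d, 0 < d /\ forall z, Rabs (z - y) < d ->
    Rabs (g z - g y - l * (z - y)) <= eps * Rabs (z - y).
Proof.
  intros Hg eps He. destruct (Hg eps He) as [d Hd].
  exists d; split; [apply cond_pos|]. intros z Hz.
  destruct (Req_dec z y) as [->|Hne].
  { rewrite !Rminus_diag, Rmult_0_r, Rminus_0_r, Rabs_R0, Rmult_0_r. lra. }
  specialize (Hd (z - y) ltac:(lra) Hz). replace (y + (z - y)) with z in Hd by ring.
  replace (g z - g y - l * (z - y)) with (((g z - g y) / (z - y) - l) * (z - y)) by (field; lra).
  rewrite Rabs_mult. apply Rmult_le_compat_r; [apply Rabs_pos| lra].
Qed.

Lemma right_derivative_comp g u t lg lu :
  derivable_pt_lim g (u t) lg -> right_derivative u t lu ->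
  right_derivative (fun s => g (u s)) t (lg * lu).
Proof.
  intros Hg Hu eps He.
  set (M := Rabs lu + 1). assert (HM : 0 < M) by (pose proof (Rabs_pos lu); unfold M; lra).
  set (N := Rabs lg + 1). assert (HN : 0 < N) by (pose proof (Rabs_pos lg); unfold N; lra).
  destruct (derivable_pt_lim_first_order g (u t) lg Hg (eps / (2 * M))) as [dg [Hdg Hlin]].
  { apply Rdiv_lt_0_compat; lra. }
  destruct (right_derivative_right_continuous u t lu Hu dg Hdg) as [d1 [Hd1 Hc]].
  destruct (Hu (Rmin 1 (eps / (2 * N)))) as [d2 [Hd2 Hq]].
  { apply Rmin_pos; [lra| apply Rdiv_lt_0_compat; lra]. }
  exists (Rmin d1 d2); split; [now apply Rmin_pos|]. intros h Hh.
  pose proof (Rmin_l d1 d2); pose proof (Rmin_r d1 d2).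
  set (D := u (t + h) - u t). set (q := D / h).
  specialize (Hq h ltac:(lra)). fold D q in Hq.
  pose proof (Rmin_l 1 (eps / (2 * N))); pose proof (Rmin_r 1 (eps / (2 * N))).
  assert (HqM : Rabs q <= M).
  { replace q with ((q - lu) + lu) by ring. pose proof (Rabs_triang (q - lu) lu). unfold M; lra. }
  assert (Hlin' : Rabs ((g (u (t + h)) - g (u t) - lg * D) / h) <= eps / 2).
  { specialize (Hlin (u (t + h)) (Hc h ltac:(lra))). fold D in Hlin.
    unfold Rdiv at 1. rewrite Rabs_mult, (Rabs_inv h), (Rabs_right h) by lra.
    apply Rle_trans with (eps / (2 * M) * Rabs q).
    - unfold q, Rdiv. rewrite Rabs_mult, (Rabs_inv h), (Rabs_right h) by lra.
      rewrite <- Rmult_assoc. apply Rmult_le_compat_r; [left; apply Rinv_0_lt_compat; lra| exact Hlin].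
    - apply Rle_trans with (eps / (2 * M) * M); [apply Rmult_le_compat_l; [left; apply Rdiv_lt_0_compat|]; lra|].
      right; field; lra. }
  assert (Hlg : Rabs (lg * (q - lu)) < eps / 2).
  { rewrite Rabs_mult. apply Rle_lt_trans with (N * Rabs (q - lu)).
    - apply Rmult_le_compat_r; [apply Rabs_pos| unfold N; lra].
    - apply Rlt_le_trans with (N * (eps / (2 * N))); [apply Rmult_lt_compat_l; lra| right; field; lra]. }
  replace ((g (u (t + h)) - g (u t)) / h - lg * lu)
    with ((g (u (t + h)) - g (u t) - lg * D) / h + lg * (q - lu)) by (unfold q; field; lra).
  eapply Rle_lt_trans; [apply Rabs_triang|].
  lra.
Qed.

Lemma right_derivative_upper_bound f t l B : right_derivative f t l -> l <= B ->
  forall eps, 0 < eps -> exists d, 0 < d /\ forall h, 0 < h < d -> (f (t + h) - f t) / h <= B + eps.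
Proof.
  intros Hf HlB eps He. destruct (Hf eps He) as [d [Hd H]].
  exists d; split; [exact Hd|]. intros h Hh.
  specialize (H h Hh). apply Rabs_def2 in H. lra.
Qed.

Lemma Rint_RiemannInt f a b (pr : Riemann_integrable f a b) : Rint f a b = RiemannInt pr.
Proof.
  unfold Rint. destruct excluded_middle_informative as [H|H].
  - apply RiemannInt_P5.
  - exfalso. apply H. now exists pr.
Qed.

Lemma continuity_Riemann_integrable f a b : continuity f -> Riemann_integrable f a b.
Proof.
  intros Hf. destruct (Rle_dec a b).
  - apply continuity_implies_RiemannInt; auto.
  - apply RiemannInt_P1, continuity_implies_RiemannInt; [lra| auto].
Qed.

Lemma Rint_chasles f a b c : continuity f -> Rint f a b + Rint f b c = Rint f a c.
Proof.
  intros Hf.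
  rewrite (Rint_RiemannInt f a b (continuity_Riemann_integrable f a b Hf)),
    (Rint_RiemannInt f b c (continuity_Riemann_integrable f b c Hf)),
    (Rint_RiemannInt f a c (continuity_Riemann_integrable f a c Hf)).
  apply RiemannInt_P26.
Qed.

Lemma Rint_same f a : Rint f a a = 0.
Proof. rewrite (Rint_RiemannInt f a a (RiemannInt_P7 f a)). apply RiemannInt_P9. Qed.

Lemma Rint_ext f g a b : a <= b -> continuity g ->
  (forall s, a <= s <= b -> f s = g s) -> Rint f a b = Rint g a b.
Proof.
  intros Hab Hg Hfg.
  pose proof (continuity_Riemann_integrable g a b Hg) as pg.
  assert (pf : Riemann_integrable f a b).
  { apply (@Riemann_integrable_ext g f); [|exact pg].
    intros s Hs. rewrite Rmin_left, Rmax_right in Hs by lra. symmetry; auto. }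
  rewrite (Rint_RiemannInt f a b pf), (Rint_RiemannInt g a b pg).
  apply RiemannInt_P18; [exact Hab|]. intros s Hs; apply Hfg; lra.
Qed.

Lemma derivable_pt_lim_Rint f c u : continuity f ->
  derivable_pt_lim (fun v => Rint f c v) u (f u).
Proof.
  intros Hf. set (a := Rmin c u - 1). set (b := Rmax c u + 1).
  pose proof (Rmin_l c u); pose proof (Rmin_r c u); pose proof (Rmax_l c u); pose proof (Rmax_r c u).
  assert (Hab : a <= b) by (unfold a, b; lra).
  set (P := primitive Hab (FTC_P1 Hab (fun x _ => Hf x))).
  assert (HP : forall v, a <= v <= b -> P v = Rint f a v).
  { intros v Hv. unfold P, primitive.
    destruct (Rle_dec a v); [|lra]. destruct (Rle_dec v b); [|lra].
    symmetry. apply Rint_RiemannInt. }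
  apply (derivable_pt_lim_locally_ext (fun v => P v - P c) _ u a b); [unfold a, b; lra| |].
  - intros v Hv. rewrite !HP by (unfold a, b in *; lra).
    rewrite <- (Rint_chasles f a c v Hf). ring.
  - rewrite <- (Rminus_0_r (f u)). apply derivable_pt_lim_minus; [|apply derivable_pt_lim_const].
    apply RiemannInt_P28. unfold a, b; lra.
Qed.

Lemma derivable_pt_lim_Rint_window f r t : continuity f ->
  derivable_pt_lim (fun v => Rint f (v - r) v) t (f t - f (t - r)).
Proof.
  intros Hf.
  apply (derivable_pt_lim_ext (fun v => Rint f 0 v - Rint f 0 (v - r))).
  { intros v. rewrite <- (Rint_chasles f 0 (v - r) v Hf). ring. }
  apply derivable_pt_lim_minus; [now apply derivable_pt_lim_Rint|].
  rewrite <- (Rmult_1_r (f (t - r))).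
  apply (derivable_pt_lim_comp (fun v => v - r) (fun w => Rint f 0 w)).
  - rewrite <- (Rminus_0_r 1). apply derivable_pt_lim_minus;
      [apply derivable_pt_lim_id| apply derivable_pt_lim_const].
  - now apply derivable_pt_lim_Rint.
Qed.

Lemma continuity_translate f h : continuity f -> continuity (fun s => f (h + s)).
Proof.
  intros Hf s. apply (continuity_pt_comp (fun s => h + s) f); [|apply Hf].
  apply continuity_pt_plus; [apply continuity_pt_const; now intros ? ?| apply derivable_continuous_pt, derivable_pt_id].
Qed.

(* Both sides have derivative [f (h + u)] in [u] and vanish at [u = a]. *)
Lemma Rint_translate f h a b : continuity f ->
  Rint (fun s => f (h + s)) a b = Rint f (h + a) (h + b).
Proof.
  intros Hf.
  set (T := fun u => Rint (fun s => f (h + s)) a u - Rint f (h + a) (h + u)).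
  assert (HT : forall u, derivable_pt_lim T u 0).
  { intros u. unfold T. rewrite <- (Rminus_diag (f (h + u))). rewrite <- (Rmult_1_r (f (h + u))) at 2.
    apply derivable_pt_lim_minus.
    - apply (derivable_pt_lim_Rint (fun s => f (h + s))), continuity_translate, Hf.
    - apply (derivable_pt_lim_comp (fun v => h + v) (fun w => Rint f (h + a) w)).
      + rewrite <- (Rplus_0_l 1). apply derivable_pt_lim_plus;
          [apply derivable_pt_lim_const| apply derivable_pt_lim_id].
      + now apply derivable_pt_lim_Rint. }
  pose (pr := fun u => exist (fun l => derivable_pt_lim T u l) 0 (HT u) : derivable_pt T u).
  assert (HTab : T b = T a) by (apply (null_derivative_1 T pr); reflexivity).
  unfold T in HTab. rewrite !Rint_same in HTab. lra.
Qed.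

Lemma Rint_translate_ext f g h a b : a <= b -> continuity f ->
  (forall s, a <= s <= b -> g s = f (h + s)) -> Rint g a b = Rint f (h + a) (h + b).
Proof.
  intros Hab Hf Hg. rewrite <- Rint_translate by exact Hf.
  apply Rint_ext; [exact Hab| now apply continuity_translate| exact Hg].
Qed.

Lemma rpow_nonneg y n : 0 <= rpow y n.
Proof. unfold rpow. destruct (Rle_dec y 0); [lra| left; apply exp_pos]. Qed.

Lemma continuity_pt_eps f t :
  (forall eps, 0 < eps -> exists d, 0 < d /\ forall y, Rabs (y - t) < d -> Rabs (f y - f t) < eps) ->
  continuity_pt f t.
Proof.
  intros H eps He. destruct (H eps He) as [d [Hd Hf]].
  exists d; split; [exact Hd|]. intros y [_ Hy]. now apply Hf.
Qed.

Lemma rpow_continuity_pt_0 n : 0 < n -> continuity_pt (fun y => rpow y n) 0.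
Proof.
  intros Hn. apply continuity_pt_eps. intros eps He.
  exists (exp (ln eps / n)); split; [apply exp_pos|]. intros z Hz.
  rewrite Rminus_0_r in Hz. unfold rpow at 2. destruct (Rle_dec 0 0); [|lra].
  unfold rpow. destruct (Rle_dec z 0); [rewrite Rminus_0_r, Rabs_R0; lra|].
  rewrite Rabs_right in Hz by lra.
  rewrite Rminus_0_r, Rabs_right by (left; apply exp_pos).
  unfold Rpower. rewrite <- (exp_ln eps He). apply exp_increasing.
  assert (Hz' : ln z < ln eps / n) by (rewrite <- (ln_exp (ln eps / n)); apply ln_increasing; lra).
  apply Rmult_lt_compat_l with (r := n) in Hz'; [|exact Hn].
  replace (n * (ln eps / n)) with (ln eps) in Hz' by (field; lra). lra.
Qed.

Lemma rpow_continuity_pt n y : 0 < n -> continuity_pt (fun y => rpow y n) y.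
Proof.
  intros Hn. destruct (Rtotal_order y 0) as [Hy|[->|Hy]].
  - apply (continuity_pt_locally_ext (fun _ => 0) _ (- y)); [lra| |apply continuity_pt_const; now intros ? ?].
    intros z Hz. unfold Rdist in Hz. apply Rabs_def2 in Hz.
    unfold rpow. destruct (Rle_dec z 0); [reflexivity| lra].
  - now apply rpow_continuity_pt_0.
  - apply (continuity_pt_locally_ext (fun y => Rpower y n) _ y y Hy).
    + intros z Hz. unfold Rdist in Hz. apply Rabs_def2 in Hz.
      unfold rpow. destruct (Rle_dec z 0); [lra| reflexivity].
    + apply derivable_continuous_pt. exists (n * Rpower y (n - 1)).
      now apply derivable_pt_lim_power.
Qed.

Lemma continuity_one_plus_rpow n : 0 < n -> continuity (fun y => 1 + rpow y n).
Proof.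
  intros Hn y. apply continuity_pt_plus; [apply continuity_pt_const; now intros ? ?|].
  now apply rpow_continuity_pt.
Qed.

Lemma continuity_Gfun_integrand n : 0 < n -> continuity (fun s => 2 * s / (1 + rpow s n)).
Proof.
  intros Hn s. apply continuity_pt_div.
  - apply continuity_pt_scal, derivable_continuous_pt, derivable_pt_id.
  - now apply continuity_one_plus_rpow.
  - pose proof (rpow_nonneg s n). lra.
Qed.

Lemma continuity_gsq n : 0 < n -> continuity (gsq n).
Proof.
  intros Hn y. unfold gsq. apply continuity_pt_div.
  - apply derivable_continuous_pt. eexists. apply derivable_pt_lim_pow.
  - apply (continuity_pt_comp (fun y => 1 + rpow y n) (fun z => z ^ 2));
      [now apply continuity_one_plus_rpow| apply derivable_continuous_pt; eexists; apply derivable_pt_lim_pow].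
  - pose proof (rpow_nonneg y n). apply pow_nonzero. lra.
Qed.

Lemma derivable_pt_lim_Gfun n y : 0 < n ->
  derivable_pt_lim (Gfun n) y (2 * y / (1 + rpow y n)).
Proof.
  intros Hn. apply (derivable_pt_lim_Rint (fun s => 2 * s / (1 + rpow s n))).
  now apply continuity_Gfun_integrand.
Qed.

Lemma Rabs_clamp_le a b y t : a <= b ->
  Rabs (Rmax a (Rmin y b) - Rmax a (Rmin t b)) <= Rabs (y - t).
Proof.
  intros Hab. pose proof (Rle_abs (y - t)) as Hp. pose proof (Rle_abs (- (y - t))) as Hm.
  rewrite Rabs_Ropp in Hm. unfold Rmax, Rmin. repeat destruct Rle_dec; apply Rabs_le; lra.
Qed.

Lemma continuous_on_clamp f a b : a <= b -> continuous_on f a b ->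
  continuity (fun t => f (Rmax a (Rmin t b))).
Proof.
  intros Hab Hf t. apply continuity_pt_eps. intros eps He.
  assert (Hc : forall y, a <= Rmax a (Rmin y b) <= b).
  { intros y. split; [apply Rmax_l| apply Rmax_lub; [exact Hab| apply Rmin_r]]. }
  destruct (Hf _ (Hc t) eps He) as [d [Hd H]].
  exists d; split; [exact Hd|]. intros y Hy.
  apply H; [apply Hc| eapply Rle_lt_trans; [apply Rabs_clamp_le|]; assumption].
Qed.

Lemma continuity_pt_glue f g h t0 : continuity_pt g t0 ->
  (forall eps, 0 < eps -> exists d, 0 < d /\ forall s, 0 < s < d -> Rabs (h (t0 + s) - h t0) < eps) ->
  (forall y, y <= t0 -> f y = g y) -> (forall y, t0 <= y -> f y = h y) ->
  continuity_pt f t0.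
Proof.
  intros Hg Hh Hfg Hfh. apply continuity_pt_eps. intros eps He.
  destruct (Hg eps He) as [d1 [Hd1 H1]]. destruct (Hh eps He) as [d2 [Hd2 H2]].
  exists (Rmin d1 d2); split; [now apply Rmin_pos|]. intros y Hy.
  pose proof (Rmin_l d1 d2); pose proof (Rmin_r d1 d2).
  destruct (Req_dec y t0) as [->|Hne]; [rewrite Rminus_diag, Rabs_R0; lra|].
  destruct (Rle_dec y t0) as [Hle|Hgt].
  - rewrite !Hfg by lra. apply H1. split; [split; [exact I| auto]|]. simpl; unfold Rdist; lra.
  - rewrite (Hfh t0), (Hfh y) by lra. replace y with (t0 + (y - t0)) by ring.
    apply H2. apply Rabs_def2 in Hy. lra.
Qed.

Lemma continuity_delay_extension r phi x l : 0 <= r ->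
  continuous_on phi (- r) 0 -> (forall s, - r <= s <= 0 -> x s = phi s) ->
  (forall t, 0 < t -> exists l', derivable_pt_lim x t l') -> right_derivative x 0 l ->
  continuity (fun t => x (Rmax t (- r))).
Proof.
  intros Hr Hphi Hinit Hder Hright.
  set (g := fun t => phi (Rmax (- r) (Rmin t 0))).
  assert (Hg : continuity g) by (apply continuous_on_clamp; [lra| exact Hphi]).
  assert (HXg : forall y, y <= 0 -> x (Rmax y (- r)) = g y).
  { intros y Hy. unfold g. rewrite Rmin_left, Rmax_comm by lra.
    apply Hinit. split; [apply Rmax_l| apply Rmax_lub; lra]. }
  intros t. destruct (Rtotal_order t 0) as [Ht|[->|Ht]].
  - apply (continuity_pt_locally_ext g _ (- t)); [lra| |apply Hg].
    intros y Hy. unfold Rdist in Hy. apply Rabs_def2 in Hy. symmetry; apply HXg; lra.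
  - apply (continuity_pt_glue _ g x); [apply Hg| | exact HXg|].
    + exact (right_derivative_right_continuous x 0 l Hright).
    + intros y Hy. now rewrite Rmax_left by lra.
  - destruct (Hder t Ht) as [l' Hl'].
    apply (continuity_pt_locally_ext x _ t t Ht).
    + intros y Hy. unfold Rdist in Hy. apply Rabs_def2 in Hy. now rewrite Rmax_left by lra.
    + apply derivable_continuous_pt. now exists l'.
Qed.

Lemma is_solution_right_derivative beta0 n delta k r phi x :
  is_solution beta0 n delta k r phi x -> right_derivative x 0 (rhs beta0 n delta k r x 0).
Proof.
  intros [_ [_ [_ Hright]]] eps He. destruct (Hright eps He) as [d [Hd H]].
  exists d; split; [exact Hd|]. intros h Hh. rewrite Rplus_0_l. now apply H.
Qed.

(* With [a = y / p] and [b = z / q]: [2 a b - b^2 <= a^2] and, as [p >= 1], [a <= y]. *)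
Lemma lyapunov_derivative_algebra beta0 delta k y z p q :
  0 <= beta0 -> 0 <= delta -> 0 <= k -> 0 <= y -> 1 <= p -> 0 < q ->
  2 * y / p * (- (beta0 / p + delta) * y + k * (beta0 * z / q))
    + k * beta0 * (y ^ 2 / p ^ 2 - z ^ 2 / q ^ 2)
  <= 2 * (k * beta0 - beta0 - delta) * (y ^ 2 / p ^ 2).
Proof.
  intros Hb Hd Hk Hy Hp Hq.
  set (a := y / p). set (b := z / q).
  assert (Ha : 0 <= a) by (unfold a; apply Rmult_le_pos; [lra| left; apply Rinv_0_lt_compat; lra]).
  assert (Hay : a <= y).
  { unfold a. apply Rmult_le_reg_r with p; [lra|]. replace (y / p * p) with y by (field; lra). nra. }
  replace (2 * y / p * (- (beta0 / p + delta) * y + k * (beta0 * z / q))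
           + k * beta0 * (y ^ 2 / p ^ 2 - z ^ 2 / q ^ 2))
    with (2 * a * (- beta0 * a - delta * y + k * beta0 * b) + k * beta0 * (a * a - b * b))
    by (unfold a, b; field; lra).
  replace (y ^ 2 / p ^ 2) with (a * a) by (unfold a; field; lra).
  assert (0 <= k * beta0 * ((a - b) * (a - b))) by (apply Rmult_le_pos; [nra| apply Rle_0_sqr]).
  assert (0 <= delta * a * (y - a)) by (apply Rmult_le_pos; nra).
  nra.
Qed.

Lemma rhs_lyapunov_bound beta0 n delta k r x :
  0 <= beta0 -> 0 <= delta -> 0 <= k -> 0 <= x 0 ->
  2 * x 0 / (1 + rpow (x 0) n) * rhs beta0 n delta k r x 0
    + k * beta0 * (gsq n (x 0) - gsq n (x (- r)))
  <= 2 * (k * beta0 - beta0 - delta) * gsq n (x 0).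
Proof.
  intros Hb Hd Hk Hx. unfold rhs, gsq. replace (0 - r) with (- r) by ring.
  pose proof (rpow_nonneg (x 0) n); pose proof (rpow_nonneg (x (- r)) n).
  apply lyapunov_derivative_algebra; lra.
Qed.

Lemma Vfun_segment beta0 n k r X psi h : 0 <= r ->
  continuity (fun s => gsq n (X s)) -> (forall s, - r <= s <= 0 -> psi s = X (h + s)) ->
  Vfun beta0 n k r psi = Gfun n (psi 0) + k * beta0 * Rint (fun s => gsq n (X s)) (h - r) h.
Proof.
  intros Hr Hg Hpsi. unfold Vfun.
  rewrite (Rint_translate_ext (fun s => gsq n (X s)) _ h); [| lra| exact Hg|].
  - now rewrite Rplus_0_r.
  - intros s Hs. now rewrite Hpsi.
Qed.

Theorem mainTheorem3 (beta0 n delta r k : R)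
  (Hb : 0 < beta0) (Hn : 0 < n) (Hd : 0 < delta) (Hr : 0 < r) (Hk : 0 < k)
  (phi x : R -> R)
  (Hphi_cont : continuous_on phi (- r) 0)
  (Hphi_nn : forall s, - r <= s <= 0 -> 0 <= phi s)
  (Hsol : is_solution beta0 n delta k r phi x) :
  forall eps, 0 < eps -> exists d, 0 < d /\ forall h, 0 < h < d ->
    (Vfun beta0 n k r (shift x h) - Vfun beta0 n k r phi) / h
      <= 2 * (k * beta0 - beta0 - delta) * gsq n (phi 0) + eps.
Proof.
  pose proof (is_solution_right_derivative _ _ _ _ _ _ _ Hsol) as Hx'.
  destruct Hsol as [Hinit [Hnonneg [Hder _]]].
  (* Extending [x] by the constant [x (- r)] to the left makes the integrand continuous on R. *)
  set (X := fun t => x (Rmax t (- r))).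
  assert (Hg : continuity (fun s => gsq n (X s))).
  { intros s. apply (continuity_pt_comp X (gsq n)); [|now apply continuity_gsq].
    apply (continuity_delay_extension r phi x (rhs beta0 n delta k r x 0));
      [lra| exact Hphi_cont| exact Hinit| |exact Hx'].
    intros t Ht. eexists. now apply Hder. }
  set (W := fun h => Gfun n (x h) + k * beta0 * Rint (fun s => gsq n (X s)) (h - r) h).
  assert (HV : forall h, 0 <= h -> Vfun beta0 n k r (shift x h) = W h).
  { intros h Hh. rewrite (Vfun_segment _ _ _ _ X _ h); [| lra| exact Hg|].
    - unfold W, shift. now rewrite Rplus_0_r.
    - intros s Hs. unfold X, shift. now rewrite Rmax_left by lra. }
  assert (HV0 : Vfun beta0 n k r phi = W 0).
  { rewrite (Vfun_segment _ _ _ _ X _ 0); [| lra| exact Hg|].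
    - unfold W. now rewrite Hinit by lra.
    - intros s Hs. unfold X. rewrite Rplus_0_l, Rmax_left by lra. now rewrite Hinit. }
  assert (HW : right_derivative W 0 (2 * x 0 / (1 + rpow (x 0) n) * rhs beta0 n delta k r x 0
      + k * beta0 * (gsq n (X 0) - gsq n (X (0 - r))))).
  { apply right_derivative_plus.
    - apply right_derivative_comp; [now apply derivable_pt_lim_Gfun| exact Hx'].
    - apply right_derivative_scal, derivable_pt_lim_right_derivative, derivable_pt_lim_Rint_window, Hg. }
  assert (Hslope : 2 * x 0 / (1 + rpow (x 0) n) * rhs beta0 n delta k r x 0
      + k * beta0 * (gsq n (X 0) - gsq n (X (0 - r)))
      <= 2 * (k * beta0 - beta0 - delta) * gsq n (phi 0)).
  { unfold X. replace (0 - r) with (- r) by ring.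
    rewrite Rmax_left, Rmax_right, <- (Hinit 0) by lra.
    apply rhs_lyapunov_bound; [lra| lra| lra| apply Hnonneg; lra]. }
  intros eps He.
  destruct (right_derivative_upper_bound W 0 _ _ HW Hslope eps He) as [d [Hd' Hbound]].
  exists d; split; [exact Hd'|]. intros h Hh.
  rewrite HV, HV0 by lra. rewrite <- (Rplus_0_l h) at 1. now apply Hbound.
Qed.
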